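(* Let $(\Lambda,d)$ be a $k$-graph and let $\overline{\Lambda}$ be the extension of $\Lambda$ described in the context (objects $\Lambda^0\sqcup\widetilde{V_\Lambda}$, morphisms $\Lambda\sqcup\widetilde{P_\Lambda}$, with the range, source, composition and identities given there). Then $\overline{\Lambda}$ is a category.
   Context: A $k$-graph $(\Lambda,d)$ is a countable category with a degree functor $d:\Lambda\to\mathbb{N}^k$ satisfying unique factorization (if $d(\lambda)=m+n$ there are unique $\mu,\nu$ with $\lambda=\mu\nu$, $d(\mu)=m$, $d(\nu)=n$); $\Lambda^0$ vertices, $r,s$ range/source, $v\Lambda^n=\{\lambda:r(\lambda)=v,d(\lambda)=n\}$; $e_i$ standard basis, $\le$ coordinatewise ($m\not\le n$ means not $m\le n$), $\vee,\wedge$ coordinatewise max/min. For $m\in(\mathbb{N}\cup\{\infty\})^k$, $\Omega_{k,m}$ has objects $\{p\in\mathbb{N}^k:p\le m\}$, morphisms $(p,q)$, $p\le q\le m$, $r(p,q)=p$, $s(p,q)=q$, $d(p,q)=q-p$. A graph morphism $x:\Omega_{k,m}\to\Lambda$ is a degree-preserving functor; $d(x)=m$, $x(a,b)=x((a,b))$, $x(a)=x(a,a)$. It is a boundary path if there is $n_x\in\mathbb{N}^k$, $n_x\le d(x)$, with $x(p)\Lambda^{e_i}=\emptyset$ whenever $p\in\mathbb{N}^k$, $n_x\le p\le d(x)$, $p_i=d(x)_i$; $\Lambda^{\le\infty}$ is the set of boundary paths. $\sigma^px(a,b)=x(a+p,b+p)$ on $\Omega_{k,d(x)-p}$ ($p\in\mathbb{N}^k$,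 $p\le d(x)$); for $\lambda$ with $s(\lambda)=x(0)$, $\lambda x$ is the graph morphism on $\Omega_{k,d(\lambda)+d(x)}$ with $(\lambda x)(0,d(\lambda))=\lambda$, $(\lambda x)(0,p)=\lambda x(0,p-d(\lambda))$. Let $V_\Lambda=\{(x;m):x\in\Lambda^{\le\infty},m\in\mathbb{N}^k,m\not\le d(x)\}$ with equivalence $(x;m)\approx(y;p)$ iff $x(m\wedge d(x))=y(p\wedge d(y))$ and $m-m\wedge d(x)=p-p\wedge d(y)$; classes $[x;m]$, quotient $\widetilde{V_\Lambda}$. Let $P_\Lambda=\{(x;(m,n)):x\in\Lambda^{\le\infty},m,n\in\mathbb{N}^k,m\le n,n\not\le d(x)\}$ with equivalence $(x;(m,n))\sim(y;(p,q))$ iff $x(m\wedge d(x),n\wedge d(x))=y(p\wedge d(y),q\wedge d(y))$, $m-m\wedge d(x)=p-p\wedge d(y)$, $n-m=q-p$; classes $[x;(m,n)]$, quotient $\widetilde{P_\Lambda}$. The extension $\overline{\Lambda}$ has objects $\Lambda^0\sqcup\widetilde{V_\Lambda}$ and morphisms $\Lambda\sqcup\widetilde{P_\Lambda}$; on $\Lambda$ range, source, composition and identities are those of $\Lambda$; $\overline r([x;(m,n)])=x(m)$ if $m\le d(x)$ and $=[x;m]$ otherwise; $\overline s([x;(m,n)])=[x;n]$; the identity at $[x;m]$ is $[x;(m,m)]$; for $\lambda\in\Lambda$ with $s(\lambda)=\overline r([x;(m,n)])$, $\lambda[x;(m,n)]=[\lambda\sigma^mx;(0,d(\lambda)+n-m)]$;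 for $\overline s([x;(m,n)])=\overline r([y;(p,q)])$, $[x;(m,n)][y;(p,q)]=[z;(m,n+q-p)]$ with $z=x(0,n\wedge d(x))\sigma^{p\wedge d(y)}y$. (These maps are well defined on equivalence classes.) The degree $\overline d$ equals $d$ on $\Lambda$ and $\overline d([x;(m,n)])=n-m$. *)

From HB Require Import structures.
From mathcomp Require Import all_boot.
From Stdlib Require Import ClassicalEpsilon.
Set Implicit Arguments. Unset Strict Implicit. Unset Printing Implicit Defensive.

Definition Nk (k : nat) := {ffun 'I_k -> nat}.
(* None stands for infinity *)
Definition NIk (k : nat) := {ffun 'I_k -> option nat}.

Section NkOps.
Variable k : nat.
Definition nk0 : Nk k := [ffun => 0].
Definition addk (m n : Nk k) : Nk k := [ffun i => m i + n i].
Definition subk (m n : Nk k) : Nk k := [ffun i => m i - n i].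
Definition joink (m n : Nk k) : Nk k := [ffun i => maxn (m i) (n i)].
Definition lek (m n : Nk k) : bool := [forall i, m i <= n i].
Definition ek (i : 'I_k) : Nk k := [ffun j => if j == i then 1 else 0].
Definition lekx (m : Nk k) (D : NIk k) : bool :=
  [forall i, if D i is Some a then m i <= a else true].
Definition meetx (m : Nk k) (D : NIk k) : Nk k :=
  [ffun i => if D i is Some a then minn (m i) a else m i].
End NkOps.

(* A countable category presented with a total composition map, whose
   values are only constrained on composable pairs (s f = r g). *)
Record kgraph (k : nat) := KGraph {
  kobj : countType;
  kmor : countType;
  kr : kmor -> kobj;
  ks : kmor -> kobj;
  kid : kobj -> kmor;
  kcomp : kmor -> kmor -> kmor;
  kd : kmor -> Nk k;
  kr_id : forall v, kr (kid v) = v;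
  ks_id : forall v, ks (kid v) = v;
  kr_comp : forall f g, ks f = kr g -> kr (kcomp f g) = kr f;
  ks_comp : forall f g, ks f = kr g -> ks (kcomp f g) = ks g;
  kcomp_idl : forall f, kcomp (kid (kr f)) f = f;
  kcomp_idr : forall f, kcomp f (kid (ks f)) = f;
  kcomp_assoc : forall f g h, ks f = kr g -> ks g = kr h ->
    kcomp f (kcomp g h) = kcomp (kcomp f g) h;
  kd_id : forall v, kd (kid v) = nk0 k;
  kd_comp : forall f g, ks f = kr g -> kd (kcomp f g) = addk (kd f) (kd g);
  kfact : forall f m n, kd f = addk m n ->
    exists! p : kmor * kmor,
      ks p.1 = kr p.2 /\ f = kcomp p.1 p.2 /\ kd p.1 = m /\ kd p.2 = n
}.

Section Extension.
Variables (k : nat) (L : kgraph k).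
Local Notation M := (kmor L).
Local Notation V := (kobj L).
Local Notation r := (@kr k L).
Local Notation s := (@ks k L).
Local Notation d := (@kd k L).
Local Notation comp := (@kcomp k L).

(* the segment of f between degrees a and b (a <= b <= d f), obtained from
   unique factorization f = f1 g f3 with d f1 = a, d g = b - a *)
Definition seg (f : M) (a b : Nk k) : M :=
  epsilon (inhabits f) (fun g => exists f1 f3,
    s f1 = r g /\ s g = r f3 /\ f = comp f1 (comp g f3) /\
    d f1 = a /\ d g = subk b a).

(* raw data of a map x : Omega_{k, pdeg x} -> Lambda, x(p,q) = pmap x p q *)
Record rpath := RPath { pdeg : NIk k; pmap : Nk k -> Nk k -> M }.

Definition vert (x : rpath) (p : Nk k) : V := r (pmap x p p).

Definition graph_morph (x : rpath) : Prop :=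
  (forall p, lekx p (pdeg x) -> pmap x p p = kid (vert x p)) /\
  (forall p q t, lek p q -> lek q t -> lekx t (pdeg x) ->
     [/\ d (pmap x p q) = subk q p,
         s (pmap x p q) = r (pmap x q t) &
         pmap x p t = comp (pmap x p q) (pmap x q t)]).

Definition boundary_path (x : rpath) : Prop :=
  graph_morph x /\
  exists nx : Nk k, lekx nx (pdeg x) /\
    forall p : Nk k, lek nx p -> lekx p (pdeg x) ->
      forall i, pdeg x i = Some (p i) ->
        forall f : M, r f = vert x p -> d f <> ek i.

Definition shift (p : Nk k) (x : rpath) : rpath :=
  RPath [ffun i => omap (fun a => a - p i) (pdeg x i)]
        (fun a b => pmap x (addk a p) (addk b p)).

(* lambda x, for s lambda = x(0) *)
Definition prepend (f : M) (x : rpath) : rpath :=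
  RPath [ffun i => omap (addn (d f i)) (pdeg x i)]
        (fun a b => seg (comp f (pmap x (nk0 k) (subk (joink b (d f)) (d f)))) a b).

(* objects and morphisms of the extension (before quotienting) *)
Definition obar := (V + (rpath * Nk k))%type.
Definition mbar := (M + (rpath * Nk k * Nk k))%type.

Definition obar_valid (a : obar) : Prop :=
  match a with
  | inl _ => True
  | inr (x, m) => boundary_path x /\ ~~ lekx m (pdeg x)
  end.

Definition mbar_valid (f : mbar) : Prop :=
  match f with
  | inl _ => True
  | inr (x, m, n) => [/\ boundary_path x, lek m n & ~~ lekx n (pdeg x)]
  end.

Definition Veq (x : rpath) (m : Nk k) (y : rpath) (p : Nk k) : Prop :=
  vert x (meetx m (pdeg x)) = vert y (meetx p (pdeg y)) /\
  subk m (meetx m (pdeg x)) = subk p (meetx p (pdeg y)).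

Definition Peq (x : rpath) (m n : Nk k) (y : rpath) (p q : Nk k) : Prop :=
  [/\ pmap x (meetx m (pdeg x)) (meetx n (pdeg x)) =
      pmap y (meetx p (pdeg y)) (meetx q (pdeg y)),
      subk m (meetx m (pdeg x)) = subk p (meetx p (pdeg y)) &
      subk n m = subk q p].

Definition obar_eq (a b : obar) : Prop :=
  match a, b with
  | inl v, inl w => v = w
  | inr (x, m), inr (y, p) => Veq x m y p
  | _, _ => False
  end.

Definition mbar_eq (f g : mbar) : Prop :=
  match f, g with
  | inl u, inl v => u = v
  | inr (x, m, n), inr (y, p, q) => Peq x m n y p q
  | _, _ => False
  end.

Definition rbar (f : mbar) : obar :=
  match f with
  | inl u => inl (r u)
  | inr (x, m, n) => if lekx m (pdeg x) then inl (vert x m) else inr (x, m)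
  end.

Definition sbar (f : mbar) : obar :=
  match f with
  | inl u => inl (s u)
  | inr (x, m, n) => inr (x, n)
  end.

Definition idbar (a : obar) : mbar :=
  match a with
  | inl v => inl (kid v)
  | inr (x, m) => inr (x, m, m)
  end.

(* composition; the case (class, path) never is composable, so its value
   is irrelevant *)
Definition compbar (f g : mbar) : mbar :=
  match f, g with
  | inl u, inl v => inl (comp u v)
  | inl u, inr (x, m, n) =>
      inr (prepend u (shift m x), nk0 k, subk (addk (d u) n) m)
  | inr (x, m, n), inr (y, p, q) =>
      inr (prepend (pmap x (nk0 k) (meetx n (pdeg x))) (shift (meetx p (pdeg y)) y),
           m, subk (addk n q) p)
  | inr _, inl _ => f
  end.
End Extension.

(* A category presented by representatives: validity predicates, equivalence
   relations (equality of classes), and structure maps on representatives. *)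
Record setoid_category (O Mo : Type) (vo : O -> Prop) (vm : Mo -> Prop)
  (eo : O -> O -> Prop) (em : Mo -> Mo -> Prop)
  (r s : Mo -> O) (i : O -> Mo) (c : Mo -> Mo -> Mo) : Prop := {
  eo_refl : forall a, vo a -> eo a a;
  eo_sym : forall a b, vo a -> vo b -> eo a b -> eo b a;
  eo_trans : forall a b e, vo a -> vo b -> vo e -> eo a b -> eo b e -> eo a e;
  em_refl : forall f, vm f -> em f f;
  em_sym : forall f g, vm f -> vm g -> em f g -> em g f;
  em_trans : forall f g h, vm f -> vm g -> vm h -> em f g -> em g h -> em f h;
  r_valid : forall f, vm f -> vo (r f);
  s_valid : forall f, vm f -> vo (s f);
  i_valid : forall a, vo a -> vm (i a);
  c_valid : forall f g, vm f -> vm g -> eo (s f) (r g) -> vm (c f g);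
  r_resp : forall f g, vm f -> vm g -> em f g -> eo (r f) (r g);
  s_resp : forall f g, vm f -> vm g -> em f g -> eo (s f) (s g);
  i_resp : forall a b, vo a -> vo b -> eo a b -> em (i a) (i b);
  c_resp : forall f f' g g', vm f -> vm f' -> vm g -> vm g' ->
    em f f' -> em g g' -> eo (s f) (r g) -> em (c f g) (c f' g');
  r_comp : forall f g, vm f -> vm g -> eo (s f) (r g) -> eo (r (c f g)) (r f);
  s_comp : forall f g, vm f -> vm g -> eo (s f) (r g) -> eo (s (c f g)) (s g);
  r_i : forall a, vo a -> eo (r (i a)) a;
  s_i : forall a, vo a -> eo (s (i a)) a;
  comp_il : forall f, vm f -> em (c (i (r f)) f) f;
  comp_ir : forall f, vm f -> em (c f (i (s f))) f;
  comp_assoc : forall f g h, vm f -> vm g -> vm h ->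
    eo (s f) (r g) -> eo (s g) (r h) -> em (c f (c g h)) (c (c f g) h)
}.

(* A morphism of the extension represented by (x;(m,n)) is determined by its
   body x(m∧d(x), n∧d(x)) in Λ, the excess m - m∧d(x) of its range and its
   degree n - m: two representatives are equivalent exactly when these three
   agree.  Composition multiplies bodies in Λ, keeps the range excess of the
   first factor and adds degrees, so identities and associativity are inherited
   from Λ.  What has to be proved is that the representatives produced by
   composition are again boundary paths with the expected bodies.  Unique
   factorisation makes segments of morphisms of Λ well defined, and from them
   one computes the segments of the concatenation λ σ^p(x) of a morphism with a
   tail of a boundary path. *)

From mathcomp Require Import all_boot zify.
From Stdlib Require Import ClassicalEpsilon.

Set Implicit Arguments. Unset Strict Implicit. Unset Printing Implicit Defensive.

(** * Coordinatewise order on N^k *)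

Lemma lekP k (m n : Nk k) : reflect (forall i, m i <= n i) (lek m n).
Proof. exact: forallP. Qed.

Lemma lekxP k (m : Nk k) (D : NIk k) :
  reflect (forall i, if D i is Some a then m i <= a else true) (lekx m D).
Proof. exact: forallP. Qed.

(* [nk_lia] proves an (in)equality in N^k or between N^k and (N u {oo})^k by
   instantiating the hypotheses of these shapes at one coordinate, splitting on
   the finiteness of the entries of (N u {oo})^k and calling [lia]. *)
Ltac nk_split_options :=
  repeat match goal with
  | |- context [fun_of_fin ?D ?j] =>
      let T := type of (fun_of_fin D j) in let T := eval hnf in T in
      lazymatch T with
      | option nat => case: (fun_of_fin D j) => [?|];
                      cbv beta iota delta [omap obind oapp]
      end
  end.

Ltac nk_lia_at i :=
  (* copy-then-clear, since [move: H] keeps section hypotheses *)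
  repeat match goal with
  | H : is_true (lek _ _) |- _ => move/lekP/(_ i): (H); clear H
  | H : is_true (lekx _ _) |- _ => move/lekxP/(_ i): (H); clear H
  | H : _ = Some _ |- _ => revert H
  | H : _ = _ |- _ => move/ffunP/(_ i): (H); clear H
  end;
  rewrite ?ffunE /=; nk_split_options; intros;
  repeat match goal with H : Some _ = Some _ |- _ => case: H => H end;
  try discriminate; lia.

Ltac nk_lia :=
  let i := fresh "i" in
  lazymatch goal with
  | |- _ = _ => apply/ffunP => i; nk_lia_at i
  | |- is_true (lek _ _) => apply/lekP => i; nk_lia_at i
  | |- is_true (lekx _ _) => apply/lekxP => i; nk_lia_at i
  end.

Section CoordinatewiseLemmas.
Variable k : nat.
Implicit Types (m n p : Nk k) (D E : NIk k).

Lemma lekk m : lek m m.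
Proof. nk_lia. Qed.

Lemma lek0k m : lek (nk0 k) m.
Proof. nk_lia. Qed.

Lemma lek_trans p m n : lek m p -> lek p n -> lek m n.
Proof. move=> *; nk_lia. Qed.

Lemma lekx_trans p m D : lek m p -> lekx p D -> lekx m D.
Proof. move=> *; nk_lia. Qed.

Lemma meetx_lekx m D : lekx (meetx m D) D.
Proof. nk_lia. Qed.

Lemma meetx_mono D m n : lek m n -> lek (meetx m D) (meetx n D).
Proof. move=> *; nk_lia. Qed.

Lemma meetx_id m D : lekx m D -> meetx m D = m.
Proof. move=> *; nk_lia. Qed.

Lemma meetx0 D : meetx (nk0 k) D = nk0 k.
Proof. nk_lia. Qed.

Lemma subk0 m : subk m (nk0 k) = m.
Proof. nk_lia. Qed.

Lemma add0k m : addk (nk0 k) m = m.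
Proof. nk_lia. Qed.

Lemma addk0 m : addk m (nk0 k) = m.
Proof. nk_lia. Qed.

Lemma lekxE m D : lekx m D = (subk m (meetx m D) == nk0 k).
Proof. by apply/idP/eqP => ?; nk_lia. Qed.

End CoordinatewiseLemmas.

Section KGraph.
Variables (k : nat) (L : kgraph k).
Local Notation M := (kmor L).
Local Notation r := (@kr k L).
Local Notation s := (@ks k L).
Local Notation d := (@kd k L).
Local Notation comp := (@kcomp k L).
Local Notation kid := (@kid k L).
Local Notation P := (rpath L).

(** * Segments of morphisms and paths in a k-graph *)

Section Paths.
Implicit Types (f g h : M) (a b c p q t : Nk k) (x y : P).

Lemma factor_unique f1 f2 g1 g2 : s f1 = r f2 -> s g1 = r g2 ->
  comp f1 f2 = comp g1 g2 -> d f1 = d g1 -> f1 = g1 /\ f2 = g2.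
Proof.
move=> sf sg e df.
have dg : d f2 = d g2.
  by move: (kd_comp sf) (kd_comp sg); rewrite e df => -> ?; nk_lia.
have [[h1 h2] [_ uniq]] := kfact (kd_comp sf).
have e1 := uniq (f1, f2) (conj sf (conj erefl (conj erefl erefl))).
have e2 := uniq (g1, g2) (conj sg (conj e (conj (esym df) (esym dg)))).
by move: e2; rewrite e1 => -[-> ->].
Qed.

Lemma factor_exists f a : lek a (d f) ->
  exists f1 f2, [/\ s f1 = r f2, f = comp f1 f2, d f1 = a & d f2 = subk (d f) a].
Proof.
move=> le_a; have df : d f = addk a (subk (d f) a) by nk_lia.
by have [[f1 f2] [[? [? [? ?]]] _]] := kfact df; exists f1, f2.
Qed.

Lemma deg0_kid f : d f = nk0 k -> f = kid (r f).
Proof.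
move=> df0; have [] // := @factor_unique (kid (r f)) f f (kid (s f)).
- by rewrite ks_id.
- by rewrite kr_id.
- by rewrite kcomp_idl kcomp_idr.
- by rewrite kd_id df0.
Qed.

Definition is_segment f a b g := exists f1 f3,
  s f1 = r g /\ s g = r f3 /\ f = comp f1 (comp g f3) /\ d f1 = a /\ d g = subk b a.

Lemma seg_factor f a b : lek a b -> lek b (d f) -> is_segment f a b (seg f a b).
Proof.
move=> le_ab le_b; rewrite /seg; apply: epsilon_spec.
have [f1 [h [s1 ef d1 dh]]] := factor_exists (lek_trans le_ab le_b).
have [|g [f3 [s3 eh dg _]]] := factor_exists (f := h) (a := subk b a).
  by rewrite dh; nk_lia.
exists g, f1, f3; do !split => //.
- by rewrite s1 eh kr_comp.
- by rewrite ef eh.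
Qed.

Lemma seg_deg f a b : lek a b -> lek b (d f) -> d (seg f a b) = subk b a.
Proof. by move=> le_ab le_b; have [? [? [? [? [? [? ?]]]]]] := seg_factor le_ab le_b. Qed.

Lemma seg_middle f1 g f3 a b : s f1 = r g -> s g = r f3 -> d f1 = a ->
  d g = subk b a -> lek a b -> seg (comp f1 (comp g f3)) a b = g.
Proof.
move=> s1 s3 d1 dg le_ab.
have le_b : lek b (d (comp f1 (comp g f3))).
  by rewrite kd_comp ?kd_comp ?kr_comp //; nk_lia.
have [f1' [f3' [s1' [s3' [e [d1' dg']]]]]] := seg_factor le_ab le_b.
have [_ e'] : f1 = f1' /\ comp g f3 = comp (seg (comp f1 (comp g f3)) a b) f3'.
  by apply: factor_unique e _; rewrite ?kr_comp ?d1 ?d1'.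
by have [<- _] := factor_unique s3 s3' e' (etrans dg (esym dg')).
Qed.

Lemma seg_full f : seg f (nk0 k) (d f) = f.
Proof.
have := @seg_middle (kid (r f)) f (kid (s f)) (nk0 k) (d f).
by rewrite kcomp_idr kcomp_idl ks_id kr_id kd_id subk0 lek0k; apply.
Qed.

Lemma seg_compl g h a b : s g = r h -> lek a b -> lek b (d g) ->
  seg (comp g h) a b = seg g a b.
Proof.
move=> sgh le_ab le_b.
have [f1 [f3 [s1 [s3 [eg [d1 dseg]]]]]] := seg_factor le_ab le_b.
have s3h : s f3 = r h by rewrite -sgh eg !ks_comp ?kr_comp.
rewrite {1}eg -!kcomp_assoc ?kr_comp ?ks_comp //.
by apply: seg_middle; rewrite ?kr_comp.
Qed.

Lemma seg_compr g h a b : s g = r h -> lek (d g) a -> lek a b ->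
  lek b (addk (d g) (d h)) ->
  seg (comp g h) a b = seg h (subk a (d g)) (subk b (d g)).
Proof.
move=> sgh le_a le_ab le_b.
have le_ab' : lek (subk a (d g)) (subk b (d g)) by nk_lia.
have le_b' : lek (subk b (d g)) (d h) by nk_lia.
have [f1 [f3 [s1 [s3 [eh [d1 dseg]]]]]] := seg_factor le_ab' le_b'.
have sgf1 : s g = r f1 by rewrite sgh {1}eh !kr_comp // kr_comp.
rewrite {1}eh kcomp_assoc ?kr_comp //.
by apply: seg_middle; rewrite ?ks_comp ?kd_comp ?dseg ?d1 //; nk_lia.
Qed.

Lemma seg_split f a b c : lek a b -> lek b c -> lek c (d f) ->
  s (seg f a b) = r (seg f b c) /\ seg f a c = comp (seg f a b) (seg f b c).
Proof.
move=> le_ab le_bc le_c.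
have [f1 [f3 [s1 [s3 [ef [d1 dg]]]]]] := seg_factor (lek_trans le_ab le_bc) le_c.
set g := seg f a c in s1 s3 ef dg *.
have [|g1 [g2 [s12 eg d1' d2]]] := factor_exists (f := g) (a := subk b a).
  by rewrite dg; nk_lia.
have s2 : s g2 = r f3 by rewrite -s3 eg ks_comp.
have s1g : s f1 = r g1 by rewrite s1 eg kr_comp.
have -> : seg f a b = g1.
  by rewrite ef eg -kcomp_assoc // seg_middle // ?kr_comp //; nk_lia.
have -> : seg f b c = g2.
  rewrite ef eg -kcomp_assoc // kcomp_assoc ?kr_comp //.
  by apply: seg_middle; rewrite ?ks_comp ?kd_comp ?kr_comp //; nk_lia.
by split.
Qed.

Section GraphMorphism.
Variable x : P.
Hypothesis x_gm : graph_morph x.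

Lemma pmap_kid a : lekx a (pdeg x) -> pmap x a a = kid (vert x a).
Proof. exact: x_gm.1. Qed.

Lemma pmap_split a b c : lek a b -> lek b c -> lekx c (pdeg x) ->
  pmap x a c = comp (pmap x a b) (pmap x b c).
Proof. by move=> ab bc c_in; case: (x_gm.2 a b c ab bc c_in). Qed.

Lemma pmap_deg a b : lek a b -> lekx b (pdeg x) -> d (pmap x a b) = subk b a.
Proof. by move=> ab b_in; case: (x_gm.2 a b b ab (lekk b) b_in). Qed.

Lemma pmap_r a b : lek a b -> lekx b (pdeg x) -> r (pmap x a b) = vert x a.
Proof.
move=> ab b_in; case: (x_gm.2 a a b (lekk a) ab b_in) => _ sab ->.
by rewrite kr_comp.
Qed.

Lemma pmap_s a b : lek a b -> lekx b (pdeg x) -> s (pmap x a b) = vert x b.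
Proof.
move=> ab b_in; case: (x_gm.2 a b b ab (lekk b) b_in) => _ sab ->.
by rewrite ks_comp // pmap_kid // ks_id.
Qed.

Lemma pmap_seg a b c : lek a b -> lek b c -> lekx c (pdeg x) ->
  pmap x a b = seg (pmap x (nk0 k) c) a b.
Proof.
move=> ab bc c_in; have b_in := lekx_trans bc c_in; have a_in := lekx_trans ab b_in.
rewrite (pmap_split (lek0k a) (lek_trans ab bc) c_in) (pmap_split ab bc c_in).
by rewrite seg_middle ?pmap_deg ?subk0 ?pmap_s ?pmap_r ?lek0k.
Qed.

End GraphMorphism.

Section Shift.
Variables (p : Nk k) (x : P).

Lemma pmap_shift a b : pmap (shift p x) a b = pmap x (addk a p) (addk b p).
Proof. by []. Qed.

Lemma vert_shift a : vert (shift p x) a = vert x (addk a p).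
Proof. by []. Qed.

Hypothesis p_in : lekx p (pdeg x).

Lemma lekx_shift t : lekx t (pdeg (shift p x)) = lekx (addk t p) (pdeg x).
Proof. by apply/idP/idP => ?; nk_lia. Qed.

Lemma graph_morph_shift : graph_morph x -> graph_morph (shift p x).
Proof.
move=> x_gm; split=> [q | a b c ab bc]; rewrite lekx_shift => c_in.
  exact: x_gm.1.
have ab' : lek (addk a p) (addk b p) by nk_lia.
have bc' : lek (addk b p) (addk c p) by nk_lia.
have [dab sab eac] := x_gm.2 _ _ _ ab' bc' c_in.
by split => //=; rewrite dab; nk_lia.
Qed.

Lemma boundary_path_shift : boundary_path x -> boundary_path (shift p x).
Proof.
move=> [x_gm [nx [nx_in nx_bd]]]; split; first exact: graph_morph_shift.
exists (subk (joink nx p) p); split; first by rewrite lekx_shift; nk_lia.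
move=> q nx_q; rewrite lekx_shift => q_in i q_max f; apply: nx_bd => //.
  by nk_lia.
move: q_max; rewrite ffunE; move/lekxP/(_ i): p_in; rewrite !ffunE.
by case: (pdeg x i) => //= a pa [eq_a]; congr Some; lia.
Qed.

End Shift.

Section Prepend.
Variables (f : M) (x : P).
Hypotheses (x_gm : graph_morph x) (fx : s f = vert x (nk0 k)).
Local Notation z := (prepend f x).

(* [prepend] reads the segment [a, b] off [f x(0, c0)] for the least usable
   [c0]; any longer initial piece of [x] gives the same segment. *)
Lemma pmap_prepend a b c : lek a b -> lek (subk (joink b (d f)) (d f)) c ->
  lekx c (pdeg x) -> pmap z a b = seg (comp f (pmap x (nk0 k) c)) a b.
Proof.
move=> ab b_c c_in; set c0 := subk (joink b (d f)) (d f) in b_c *.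
have c0_in := lekx_trans b_c c_in.
have f_x0 : s f = r (pmap x (nk0 k) c0) by rewrite fx pmap_r ?lek0k.
have x0_x : s (pmap x (nk0 k) c0) = r (pmap x c0 c) by rewrite pmap_s ?pmap_r ?lek0k.
have b_le : lek b (d (comp f (pmap x (nk0 k) c0))).
  by rewrite kd_comp // pmap_deg ?lek0k //; nk_lia.
rewrite /= (pmap_split x_gm (lek0k c0) b_c c_in) kcomp_assoc //.
by rewrite [RHS]seg_compl // ks_comp.
Qed.

Lemma graph_morph_prepend : graph_morph z.
Proof.
have f_x0 c : lekx c (pdeg x) -> s f = r (pmap x (nk0 k) c).
  by move=> c_in; rewrite fx pmap_r ?lek0k.
have d_fx0 c : lekx c (pdeg x) -> d (comp f (pmap x (nk0 k) c)) = addk (d f) c.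
  move=> c_in; rewrite kd_comp; last exact: f_x0.
  by rewrite pmap_deg ?lek0k // subk0.
split=> [a a_in | a b c ab bc c_in].
- pose c0 := subk (joink a (d f)) (d f).
  have c0_in : lekx c0 (pdeg x) by nk_lia.
  have := pmap_prepend (lekk a) (lekk c0) c0_in; rewrite /vert => ->.
  by apply: deg0_kid; rewrite seg_deg ?d_fx0 ?lekk //; nk_lia.
- pose c0 := subk (joink c (d f)) (d f).
  have c0_in : lekx c0 (pdeg x) by nk_lia.
  have c_le : lek c (d (comp f (pmap x (nk0 k) c0))) by rewrite d_fx0 //; nk_lia.
  rewrite !(@pmap_prepend _ _ c0) //; try nk_lia.
  have [-> ->] := seg_split ab bc c_le.
  by split=> //; rewrite seg_deg // (lek_trans bc c_le).
Qed.

Lemma pmap_prepend_tail a c : lek a (d f) -> lekx c (pdeg x) ->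
  pmap z a (addk (d f) c) = comp (seg f a (d f)) (pmap x (nk0 k) c).
Proof.
move=> a_le c_in; have f_x0 : s f = r (pmap x (nk0 k) c) by rewrite fx pmap_r ?lek0k.
have d_x0 : d (pmap x (nk0 k) c) = c by rewrite pmap_deg ?lek0k // subk0.
have df_le : lek (d f) (addk (d f) c) by nk_lia.
have top : lek (addk (d f) c) (d (comp f (pmap x (nk0 k) c))).
  by rewrite kd_comp // d_x0 lekk.
rewrite (@pmap_prepend _ _ c) ?(lek_trans a_le df_le) //; last by nk_lia.
have [_ ->] := seg_split a_le df_le top.
rewrite seg_compl ?lekk // seg_compr ?d_x0 ?lekk //.
have -> : subk (d f) (d f) = nk0 k by nk_lia.
have -> : subk (addk (d f) c) (d f) = c by nk_lia.
by rewrite -(pmap_seg x_gm (lek0k c) (lekk c) c_in).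
Qed.

Lemma vert_prepend c : lekx c (pdeg x) -> vert z (addk (d f) c) = vert x c.
Proof.
move=> c_in; have z_gm := graph_morph_prepend.
rewrite -(pmap_s z_gm (lek0k _)); last by nk_lia.
rewrite (pmap_prepend_tail (lek0k _) c_in) ks_comp ?pmap_s ?lek0k //.
by rewrite seg_full fx pmap_r ?lek0k.
Qed.

End Prepend.

Lemma boundary_path_prepend f x : boundary_path x -> s f = vert x (nk0 k) ->
  boundary_path (prepend f x).
Proof.
move=> [x_gm [nx [nx_in nx_bd]]] fx; split; first exact: graph_morph_prepend.
exists (addk (d f) nx); split; first by nk_lia.
move=> q nx_q q_in i q_max g g_q.
have eq : q = addk (d f) (subk q (d f)) by nk_lia.
apply: (nx_bd (subk q (d f))); try nk_lia.
- move: q_max; rewrite !ffunE; case: (pdeg x i) => [a|] //= [<-].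
  by congr Some; lia.
- by rewrite g_q eq vert_prepend -?eq //; nk_lia.
Qed.

Lemma boundary_path_concat f y c : boundary_path y -> lekx c (pdeg y) ->
  s f = vert y c -> boundary_path (prepend f (shift c y)).
Proof.
move=> y_bp c_in fy; apply: boundary_path_prepend; first exact: boundary_path_shift.
by rewrite vert_shift add0k.
Qed.

Lemma pmap_concat f y c a t : graph_morph y -> lekx c (pdeg y) -> s f = vert y c ->
  lek a (d f) -> lekx (addk t c) (pdeg y) ->
  pmap (prepend f (shift c y)) a (addk (d f) t) =
  comp (seg f a (d f)) (pmap y c (addk t c)).
Proof.
move=> y_gm c_in fy a_le tc_in.
have fy0 : s f = vert (shift c y) (nk0 k) by rewrite vert_shift add0k.
have t_in : lekx t (pdeg (shift c y)) by rewrite lekx_shift.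
rewrite (pmap_prepend_tail (graph_morph_shift c_in y_gm) fy0 a_le t_in).
by rewrite pmap_shift add0k.
Qed.

Section CompositeLP.
Variables (u : M) (x : P) (m n : Nk k).
Local Notation z := (prepend u (shift m x)).
Local Notation N := (subk (addk (d u) n) m).

Lemma lp_boundary : boundary_path x -> lekx m (pdeg x) -> s u = vert x m ->
  boundary_path z.
Proof. exact: boundary_path_concat. Qed.

Lemma lp_out : lekx m (pdeg x) -> ~~ lekx n (pdeg x) -> ~~ lekx N (pdeg z).
Proof. by move=> m_in n_out; apply: contra n_out => ?; nk_lia. Qed.

Lemma lp_meet : lek m n -> lekx m (pdeg x) ->
  meetx N (pdeg z) = addk (d u) (subk (meetx n (pdeg x)) m).
Proof. move=> *; nk_lia. Qed.

Lemma lp_body : graph_morph x -> lek m n -> lekx m (pdeg x) -> s u = vert x m ->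
  pmap z (nk0 k) (meetx N (pdeg z)) = comp u (pmap x m (meetx n (pdeg x))).
Proof.
move=> x_gm mn m_in ux; have m_nx : lek m (meetx n (pdeg x)) by nk_lia.
rewrite lp_meet // pmap_concat ?lek0k ?seg_full //.
  by congr comp; congr pmap; nk_lia.
by nk_lia.
Qed.

Lemma lp_sexcess : lek m n -> lekx m (pdeg x) ->
  subk N (meetx N (pdeg z)) = subk n (meetx n (pdeg x)).
Proof. by move=> mn m_in; rewrite lp_meet //; nk_lia. Qed.

End CompositeLP.

Lemma pmap_prefix_deg x n : graph_morph x ->
  d (pmap x (nk0 k) (meetx n (pdeg x))) = meetx n (pdeg x).
Proof. by move=> x_gm; rewrite pmap_deg ?lek0k ?meetx_lekx ?subk0. Qed.

Section CompositePP.
Variables (x y : P) (m n p q : Nk k).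
Local Notation f := (pmap x (nk0 k) (meetx n (pdeg x))).
Local Notation z := (prepend f (shift (meetx p (pdeg y)) y)).
Local Notation N := (subk (addk n q) p).
Local Notation excess_agree := (subk n (meetx n (pdeg x)) = subk p (meetx p (pdeg y))).

Lemma pp_boundary : boundary_path x -> boundary_path y ->
  vert x (meetx n (pdeg x)) = vert y (meetx p (pdeg y)) -> boundary_path z.
Proof.
move=> x_bp y_bp xy_vert; apply: boundary_path_concat => //; first exact: meetx_lekx.
by rewrite (pmap_s x_bp.1) ?lek0k ?meetx_lekx.
Qed.

Lemma pp_out : graph_morph x -> lek p q -> ~~ lekx q (pdeg y) -> excess_agree ->
  ~~ lekx N (pdeg z).
Proof.
move=> x_gm pq q_out xy_off; have df := pmap_prefix_deg n x_gm.
by apply: contra q_out => ?; nk_lia.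
Qed.

Lemma pp_meetl : graph_morph x -> lek m n -> excess_agree ->
  meetx m (pdeg z) = meetx m (pdeg x).
Proof. by move=> x_gm mn xy_off; have df := pmap_prefix_deg n x_gm; nk_lia. Qed.

Lemma pp_meetr : graph_morph x -> lek p q -> excess_agree ->
  meetx N (pdeg z) =
  addk (meetx n (pdeg x)) (subk (meetx q (pdeg y)) (meetx p (pdeg y))).
Proof. by move=> x_gm pq xy_off; have df := pmap_prefix_deg n x_gm; nk_lia. Qed.

Lemma pp_body : graph_morph x -> graph_morph y -> lek m n -> lek p q ->
  vert x (meetx n (pdeg x)) = vert y (meetx p (pdeg y)) -> excess_agree ->
  pmap z (meetx m (pdeg x)) (meetx N (pdeg z)) =
  comp (pmap x (meetx m (pdeg x)) (meetx n (pdeg x)))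
       (pmap y (meetx p (pdeg y)) (meetx q (pdeg y))).
Proof.
move=> x_gm y_gm mn pq xy_vert xy_off; have df := pmap_prefix_deg n x_gm.
have fy : s f = vert y (meetx p (pdeg y)) by rewrite pmap_s ?lek0k ?meetx_lekx.
have m_le : lek (meetx m (pdeg x)) (d f) by rewrite df meetx_mono.
have t_in : lekx (addk (subk (meetx q (pdeg y)) (meetx p (pdeg y))) (meetx p (pdeg y)))
  (pdeg y) by nk_lia.
have := pmap_concat y_gm (meetx_lekx p (pdeg y)) fy m_le t_in.
rewrite df pp_meetr // => ->.
rewrite -pmap_seg ?meetx_mono ?lekk ?meetx_lekx //.
by congr comp; congr pmap; nk_lia.
Qed.

Lemma pp_sexcess : graph_morph x -> lek p q -> excess_agree ->
  subk N (meetx N (pdeg z)) = subk q (meetx q (pdeg y)).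
Proof. by move=> x_gm pq xy_off; rewrite pp_meetr //; nk_lia. Qed.

End CompositePP.
End Paths.

(** * The extension *)

Arguments shift : simpl never.
Arguments prepend : simpl never.

Definition is_inr (A B : Type) (u : A + B) : bool := if u is inr _ then true else false.

Section Extension.
Implicit Types (a b c : obar L) (f g h : mbar L) (u : M) (x y : P) (m n p q : Nk k).

Definition mbody f : M :=
  match f with
  | inl u => u
  | inr (x, m, n) => pmap x (meetx m (pdeg x)) (meetx n (pdeg x))
  end.

Definition rexcess f : Nk k :=
  if f is inr (x, m, _) then subk m (meetx m (pdeg x)) else nk0 k.

Definition sexcess f : Nk k :=
  if f is inr (x, _, n) then subk n (meetx n (pdeg x)) else nk0 k.

Definition dbar f : Nk k := match f with inl u => d u | inr (_, m, n) => subk n m end.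

Lemma mbar_eqP f g : mbar_eq f g <->
  [/\ is_inr f = is_inr g, mbody f = mbody g, rexcess f = rexcess g & dbar f = dbar g].
Proof.
case: f => [u|[[x m] n]]; case: g => [v|[[y p] q]] /=; split => //;
  by [move=> -> | case].
Qed.

Lemma obar_eq_refl a : obar_eq a a.
Proof. by case: a => [v|[x m]]. Qed.

Lemma obar_eq_sym a b : obar_eq a b -> obar_eq b a.
Proof. by case: a => [v|[x m]]; case: b => [w|[y p]]; rewrite //= /Veq => -[-> ->]. Qed.

Lemma obar_eq_trans a b c : obar_eq a b -> obar_eq b c -> obar_eq a c.
Proof.
case: a => [v|[x m]]; case: b => [w|[y p]]; case: c => [u|[z q]] //=.
- by move=> -> ->.
- by rewrite /Veq => -[-> ->] [-> ->].
Qed.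

Lemma mbar_eq_refl f : mbar_eq f f.
Proof. exact/mbar_eqP. Qed.

Lemma mbar_eq_sym f g : mbar_eq f g -> mbar_eq g f.
Proof. by move/mbar_eqP=> [? ? ? ?]; apply/mbar_eqP; split. Qed.

Lemma mbar_eq_trans f g h : mbar_eq f g -> mbar_eq g h -> mbar_eq f h.
Proof.
by move=> /mbar_eqP[? ? ? ?] /mbar_eqP[? ? ? ?]; apply/mbar_eqP; split; congruence.
Qed.

Lemma composable_lr u x m n : obar_eq (sbar (inl u)) (rbar (inr (x, m, n))) ->
  lekx m (pdeg x) /\ s u = vert x m.
Proof. by rewrite /=; case: ifP. Qed.

Lemma composable_rr x m n y p q :
  obar_eq (sbar (inr (x, m, n))) (rbar (inr (y, p, q))) -> Veq x n y p.
Proof. by rewrite /=; case: ifP. Qed.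

Section ValidPathMorphism.
Variables (x : P) (m n : Nk k).
Hypothesis valid : mbar_valid (inr (x, m, n)).

Let x_gm : graph_morph x. Proof. by case: valid => -[]. Qed.
Let mn : lek (meetx m (pdeg x)) (meetx n (pdeg x)).
Proof. by case: valid => _ mn _; apply: meetx_mono. Qed.

Lemma r_mbody : r (mbody (inr (x, m, n))) = vert x (meetx m (pdeg x)).
Proof. by rewrite /= pmap_r ?meetx_lekx. Qed.

Lemma s_mbody : s (mbody (inr (x, m, n))) = vert x (meetx n (pdeg x)).
Proof. by rewrite /= pmap_s ?meetx_lekx. Qed.

Lemma d_mbody : d (mbody (inr (x, m, n))) = subk (meetx n (pdeg x)) (meetx m (pdeg x)).
Proof. by rewrite /= pmap_deg ?meetx_lekx. Qed.

End ValidPathMorphism.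

Lemma rbar_eq f g : mbar_valid f -> mbar_valid g -> rexcess f = rexcess g ->
  r (mbody f) = r (mbody g) -> obar_eq (rbar f) (rbar g).
Proof.
case: f => [u|[[x m] n]] vf; case: g => [v|[[y p] q]] vg; rewrite ?r_mbody //=.
- by move=> /esym/eqP; rewrite -lekxE => p_in; rewrite p_in meetx_id.
- by move=> /eqP; rewrite -lekxE => m_in; rewrite m_in meetx_id.
move=> e xy; have lekx_mp : lekx m (pdeg x) = lekx p (pdeg y) by rewrite !lekxE e.
rewrite lekx_mp; case: ifP => [p_in | _]; last by split.
by rewrite -(meetx_id p_in) -(@meetx_id _ m (pdeg x)) ?lekx_mp.
Qed.

Lemma sbar_eq f g : mbar_valid f -> mbar_valid g -> is_inr f = is_inr g ->
  s (mbody f) = s (mbody g) -> sexcess f = sexcess g -> obar_eq (sbar f) (sbar g).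
Proof.
by case: f => [u|[[x m] n]] vf; case: g => [v|[[y p] q]] vg; rewrite ?s_mbody //=.
Qed.

Lemma sexcessE f : mbar_valid f ->
  sexcess f = subk (addk (rexcess f) (dbar f)) (d (mbody f)).
Proof. by case: f => [u|[[x m] n]] vf; rewrite ?d_mbody //=; case: vf => *; nk_lia. Qed.

Lemma mbody_composable f g : mbar_valid f -> mbar_valid g ->
  obar_eq (sbar f) (rbar g) -> s (mbody f) = r (mbody g).
Proof.
case: f => [u|[[x m] n]] vf; case: g => [v|[[y p] q]] vg //.
- by move/composable_lr => [m_in ->]; rewrite r_mbody // meetx_id.
- by move/composable_rr => [e _]; rewrite s_mbody // r_mbody.
Qed.

Lemma mbody_idbar_rbar f : mbar_valid f -> mbody (idbar (rbar f)) = kid (r (mbody f)).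
Proof.
case: f => [u|[[x m] n]] vf //; rewrite r_mbody //=.
case: ifP => [m_in|_] /=; first by rewrite meetx_id.
by case: vf => -[x_gm _] _ _; rewrite pmap_kid ?meetx_lekx.
Qed.

Lemma mbody_idbar_sbar f : mbar_valid f -> mbody (idbar (sbar f)) = kid (s (mbody f)).
Proof.
case: f => [u|[[x m] n]] vf //; rewrite s_mbody //=.
by case: vf => -[x_gm _] _ _; rewrite pmap_kid ?meetx_lekx.
Qed.

Lemma rexcess_idbar_rbar f : rexcess (idbar (rbar f)) = rexcess f.
Proof. by case: f => [u|[[x m] n]] //=; case: ifP => //; rewrite lekxE => /eqP ->. Qed.

Lemma dbar_idbar a : dbar (idbar a) = nk0 k.
Proof. by case: a => [v|[x m]] /=; [rewrite kd_id | nk_lia]. Qed.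

Lemma is_inr_compbar f g : obar_eq (sbar f) (rbar g) -> is_inr (compbar f g) = is_inr g.
Proof. by case: f => [u|[[x m] n]]; case: g => [v|[[y p] q]]. Qed.

Lemma compbar_spec f g : mbar_valid f -> mbar_valid g -> obar_eq (sbar f) (rbar g) ->
  [/\ mbar_valid (compbar f g), mbody (compbar f g) = comp (mbody f) (mbody g),
      rexcess (compbar f g) = rexcess f, sexcess (compbar f g) = sexcess g
    & dbar (compbar f g) = addk (dbar f) (dbar g)].
Proof.
case: f => [u|[[x m] n]] vf; case: g => [v|[[y p] q]] vg //.
- by move=> /= uv; rewrite kd_comp.
- case: vg => x_bp mn n_out /composable_lr [m_in ux]; have x_gm := x_bp.1.
  cbn [compbar mbody rexcess sexcess dbar mbar_valid].
  rewrite meetx0 (meetx_id m_in) lp_body ?lp_sexcess //; split => //; try nk_lia.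
  by split; [exact: lp_boundary | exact: lek0k | exact: lp_out].
- case: vf vg => [x_bp mn n_out] [y_bp pq q_out] /composable_rr [xy_vert xy_off].
  have x_gm := x_bp.1; have y_gm := y_bp.1.
  cbn [compbar mbody rexcess sexcess dbar mbar_valid].
  rewrite pp_meetl ?pp_body ?pp_sexcess //; split => //; try nk_lia.
  by split; [apply: pp_boundary | nk_lia | apply: pp_out].
Qed.

Lemma rbar_valid f : mbar_valid f -> obar_valid (rbar f).
Proof. by case: f => [u|[[x m] n]] //= [x_bp _ _]; case: ifP => // /negbT. Qed.

Lemma sbar_valid f : mbar_valid f -> obar_valid (sbar f).
Proof. by case: f => [u|[[x m] n]] //= []. Qed.

Lemma idbar_valid a : obar_valid a -> mbar_valid (idbar a).
Proof. by case: a => [v|[x m]] //= [x_bp m_out]; split; rewrite ?lekk. Qed.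

Lemma rbar_resp f g : mbar_valid f -> mbar_valid g -> mbar_eq f g ->
  obar_eq (rbar f) (rbar g).
Proof. by move=> vf vg /mbar_eqP[_ eb er _]; apply: rbar_eq; rewrite ?eb. Qed.

Lemma sbar_resp f g : mbar_valid f -> mbar_valid g -> mbar_eq f g ->
  obar_eq (sbar f) (sbar g).
Proof.
move=> vf vg /mbar_eqP[ek eb er ed]; apply: sbar_eq; rewrite ?eb //.
by rewrite !sexcessE // eb er ed.
Qed.

Lemma idbar_resp a b : obar_valid a -> obar_valid b -> obar_eq a b ->
  mbar_eq (idbar a) (idbar b).
Proof.
case: a => [v|[x m]]; case: b => [w|[y p]] //=; first by move=> _ _ ->.
move=> [[x_gm _] _] [[y_gm _] _] [e1 e2]; split => //; last by nk_lia.
by rewrite !pmap_kid ?meetx_lekx // e1.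
Qed.

Lemma compbar_resp f f' g g' : mbar_valid f -> mbar_valid f' -> mbar_valid g ->
  mbar_valid g' -> mbar_eq f f' -> mbar_eq g g' -> obar_eq (sbar f) (rbar g) ->
  mbar_eq (compbar f g) (compbar f' g').
Proof.
move=> vf vf' vg vg' ff' gg' fg.
have f'g' : obar_eq (sbar f') (rbar g').
  apply: obar_eq_trans (rbar_resp vg vg' gg'); apply: obar_eq_trans fg.
  exact: obar_eq_sym (sbar_resp vf vf' ff').
have [_ b1 r1 _ d1] := compbar_spec vf vg fg.
have [_ b2 r2 _ d2] := compbar_spec vf' vg' f'g'.
move: ff' gg' => /mbar_eqP[_ bf rf df] /mbar_eqP[kg bg _ dg].
by apply/mbar_eqP; rewrite !is_inr_compbar // b1 b2 r1 r2 d1 d2 bf rf df bg kg dg.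
Qed.

Lemma rbar_compbar f g : mbar_valid f -> mbar_valid g -> obar_eq (sbar f) (rbar g) ->
  obar_eq (rbar (compbar f g)) (rbar f).
Proof.
move=> vf vg fg; have [vfg b e _ _] := compbar_spec vf vg fg.
by apply: rbar_eq; rewrite // b kr_comp // (mbody_composable vf vg fg).
Qed.

Lemma sbar_compbar f g : mbar_valid f -> mbar_valid g -> obar_eq (sbar f) (rbar g) ->
  obar_eq (sbar (compbar f g)) (sbar g).
Proof.
move=> vf vg fg; have [vfg b _ e _] := compbar_spec vf vg fg.
by apply: sbar_eq; rewrite ?is_inr_compbar // b ks_comp // (mbody_composable vf vg fg).
Qed.

Lemma rbar_idbar a : obar_valid a -> obar_eq (rbar (idbar a)) a.
Proof.
case: a => [v|[x m]] /=; first by rewrite kr_id.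
by move=> [_ m_out]; rewrite (negbTE m_out); apply: obar_eq_refl.
Qed.

Lemma sbar_idbar a : obar_eq (sbar (idbar a)) a.
Proof. by case: a => [v|[x m]] /=; rewrite ?ks_id. Qed.

Lemma compbar_idl f : mbar_valid f -> mbar_eq (compbar (idbar (rbar f)) f) f.
Proof.
move=> vf; have vi := idbar_valid (rbar_valid vf).
have [_ b e _ dd] := compbar_spec vi vf (sbar_idbar _).
apply/mbar_eqP; split.
- exact: is_inr_compbar (sbar_idbar _).
- by rewrite b mbody_idbar_rbar // kcomp_idl.
- by rewrite e rexcess_idbar_rbar.
- by rewrite dd dbar_idbar add0k.
Qed.

Lemma compbar_idr f : mbar_valid f -> mbar_eq (compbar f (idbar (sbar f))) f.
Proof.
move=> vf; have vi := idbar_valid (sbar_valid vf).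
have fi := obar_eq_sym (rbar_idbar (sbar_valid vf)).
have [_ b e _ dd] := compbar_spec vf vi fi.
apply/mbar_eqP; split => //.
- by rewrite is_inr_compbar //; case: f {vf vi fi b e dd} => [u|[[x m] n]].
- by rewrite b mbody_idbar_sbar // kcomp_idr.
- by rewrite dd dbar_idbar addk0.
Qed.

Lemma compbar_assoc f g h : mbar_valid f -> mbar_valid g -> mbar_valid h ->
  obar_eq (sbar f) (rbar g) -> obar_eq (sbar g) (rbar h) ->
  mbar_eq (compbar f (compbar g h)) (compbar (compbar f g) h).
Proof.
move=> vf vg vh fg gh.
have [vgh bgh _ _ dgh] := compbar_spec vg vh gh.
have [vfg bfg rfg _ dfg] := compbar_spec vf vg fg.
have f_gh := obar_eq_trans fg (obar_eq_sym (rbar_compbar vg vh gh)).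
have fg_h := obar_eq_trans (sbar_compbar vf vg fg) gh.
have [_ b1 r1 _ d1] := compbar_spec vf vgh f_gh.
have [_ b2 r2 _ d2] := compbar_spec vfg vh fg_h.
apply/mbar_eqP; split.
- by rewrite !is_inr_compbar.
- rewrite b1 b2 bgh bfg kcomp_assoc //.
  + exact: mbody_composable vf vg fg.
  + exact: mbody_composable vg vh gh.
- by rewrite r1 r2 rfg.
- by rewrite d1 d2 dgh dfg; nk_lia.
Qed.

End Extension.
End KGraph.

Theorem lemma3p21 (k : nat) (L : kgraph k) :
  setoid_category (@obar_valid k L) (@mbar_valid k L)
    (@obar_eq k L) (@mbar_eq k L)
    (@rbar k L) (@sbar k L) (@idbar k L) (@compbar k L).
Proof.
split.
- by move=> a _; apply: obar_eq_refl.
- by move=> a b _ _; apply: obar_eq_sym.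
- by move=> a b c _ _ _; apply: obar_eq_trans.
- by move=> f _; apply: mbar_eq_refl.
- by move=> f g _ _; apply: mbar_eq_sym.
- by move=> f g h _ _ _; apply: mbar_eq_trans.
- exact: rbar_valid.
- exact: sbar_valid.
- exact: idbar_valid.
- by move=> f g vf vg fg; case: (compbar_spec vf vg fg).
- exact: rbar_resp.
- exact: sbar_resp.
- exact: idbar_resp.
- exact: compbar_resp.
- exact: rbar_compbar.
- exact: sbar_compbar.
- exact: rbar_idbar.
- by move=> a _; apply: sbar_idbar.
- exact: compbar_idl.
- exact: compbar_idr.
- exact: compbar_assoc.
Qed.
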